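(* Let an instance with $n$ agents $[n]=\{1,\dots,n\}$, $m$ indivisible items $[m]$ and binary additive valuations be given (notation as in the context). Then every stable allocation is optimal under $\mathsf{LexiMin}$, i.e. it minimizes $\mathsf{LexiMin}(\mathbf{p}(\chi))=\sum_{i=1}^n m^{\,m-h_i}$ over all clean max-USW allocations $\chi$. Consequently, the profiles of any two stable allocations are equal up to a permutation of the coordinates.
   Context: Each agent $i\in[n]$ has a set $L_i\subseteq[m]$ of liked items, and valuation $v_i(S)=|S\cap L_i|$ for $S\subseteq[m]$. An allocation $\chi=(\chi_1,\dots,\chi_n)$ is a tuple of pairwise disjoint subsets of $[m]$ (not necessarily covering $[m]$). It is clean if $\chi_i\subseteq L_i$ for all $i$, and max-USW if it maximizes $\sum_i v_i(\chi_i)$ among all allocations. Throughout, ''allocation'' means a clean max-USW allocation. The profile of $\chi$ is $\mathbf{p}(\chi)=(h_1,\dots,h_n)$ with $h_i=|\chi_i|$. Given $\chi$, form a directed graph on $[n]$ with an arc $(i,i')$, $i\neq i'$, whenever some item $o\in\chi_i$ satisfies $o\in L_{i'}$. $\chi$ admits a transfer $u\to v$ if there is a simple directed path from $u$ to $v$ with at least one arc in this graph (reallocating the items along the path makes $u$ lose one item and $v$ gain one). A transfer $u\to v$ is narrowing if $h_u\ge h_v+2$. $\chi$ is stable if it admits no narrowing transfer. $\mathsf{LexiMin}(h_1,\dots,h_n)=\sum_i m^{m-h_i}$; an allocation is optimal under a criterion $f$ if it minimizes $f(\mathbf{p}(\chi))$ over all clean max-USW allocations. *)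

From mathcomp Require Import all_boot all_fingroup.
Set Implicit Arguments. Unset Strict Implicit. Unset Printing Implicit Defensive.

(* Agents are 'I_n, items are 'I_m; L i is the set of items liked by agent i. *)
Definition alloc (n m : nat) := {ffun 'I_n -> {set 'I_m}}.

Section Defs.
Variables (n m : nat) (L : 'I_n -> {set 'I_m}).

Definition val (i : 'I_n) (S : {set 'I_m}) : nat := #|S :&: L i|.

Definition is_alloc (chi : alloc n m) : Prop :=
  forall i j : 'I_n, i != j -> [disjoint chi i & chi j].

Definition usw (chi : alloc n m) : nat := \sum_(i < n) val i (chi i).

Definition clean (chi : alloc n m) : Prop := forall i, chi i \subset L i.

Definition max_usw (chi : alloc n m) : Prop :=
  is_alloc chi /\ forall chi' : alloc n m, is_alloc chi' -> usw chi' <= usw chi.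

(* "allocation" in the paper: clean max-USW allocation *)
Definition clean_max_usw (chi : alloc n m) : Prop := clean chi /\ max_usw chi.

Definition profile (chi : alloc n m) (i : 'I_n) : nat := #|chi i|.

Definition arc (chi : alloc n m) : rel 'I_n :=
  fun i i' => (i != i') && [exists o, (o \in chi i) && (o \in L i')].

Definition transfer (chi : alloc n m) (u v : 'I_n) : Prop :=
  exists p : seq 'I_n, [/\ p != [::], path (arc chi) u p, last u p = v & uniq (u :: p)].

Definition narrowing (chi : alloc n m) (u v : 'I_n) : Prop :=
  transfer chi u v /\ profile chi v + 2 <= profile chi u.

Definition stable (chi : alloc n m) : Prop :=
  clean_max_usw chi /\ forall u v, ~ narrowing chi u v.

Definition leximin (h : 'I_n -> nat) : nat := \sum_(i < n) m ^ (m - h i).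

Definition leximin_optimal (chi : alloc n m) : Prop :=
  clean_max_usw chi /\
  forall chi' : alloc n m, clean_max_usw chi' ->
    leximin (profile chi) <= leximin (profile chi').

End Defs.

(* All clean max-USW allocations hand out the same number of items, and carrying
   out a transfer along a simple path keeps an allocation clean and max-USW while
   moving one unit of its profile from the first to the last agent of the path.
   Let chi be stable and chi' any allocation with h'_u < h_u.  Following items of
   chi into the chi'-bundles holding them, u reaches some v with h_v < h'_v
   (otherwise the chi-items of the reached agents, all lying in their
   chi'-bundles, would outnumber them); this path is a transfer u -> v in chi and,
   reversed, a transfer v -> u in chi'.  Stability of chi gives h_u <= h_v + 1,
   hence h'_u < h'_v, so by convexity of x |-> m^(m-x) the transfer in chi' does
   not increase LexiMin while it decreases sum_i (h_i - h'_i).  Induction on this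
   excess proves optimality.  Conversely a narrowing transfer strictly decreases
   LexiMin, so stable and LexiMin-optimal allocations coincide; between two of
   them every step above swaps two entries of the profile. *)

From Pilot Require Import Defs.
From mathcomp Require Import all_boot all_fingroup.
From mathcomp Require Import zify.

Set Implicit Arguments. Unset Strict Implicit. Unset Printing Implicit Defensive.

Lemma sum_ltn (I : finType) (P : pred I) (F G : I -> nat) i0 :
  P i0 -> (forall i, P i -> F i <= G i) -> F i0 < G i0 ->
  \sum_(i | P i) F i < \sum_(i | P i) G i.
Proof.
move=> Pi0 leFG ltFG; rewrite (bigD1 i0) //= [X in _ < X](bigD1 i0) //= -addSn.
by rewrite leq_add // leq_sum // => i /andP[/leFG].
Qed.

Lemma sum_update2 (I : finType) (F G : I -> nat) u v : u != v ->
  (forall i, i != u -> i != v -> G i = F i) ->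
  \sum_i G i + (F u + F v) = \sum_i F i + (G u + G v).
Proof.
move=> uv eqGF; rewrite (bigD1 u) // (bigD1 v) 1?eq_sym //=.
rewrite [in RHS](bigD1 u) // [in RHS](bigD1 v) 1?eq_sym //=.
rewrite (eq_bigr F) => [|i /andP[iu iv]]; last exact: eqGF.
lia.
Qed.

Lemma expn_subn_convex b k x c : 0 < b -> x <= c ->
  b ^ (k - c) + b ^ (k - x.+1) <= b ^ (k - c.+1) + b ^ (k - x).
Proof.
move=> b_gt0 xc; case: (ltnP c k) => [ck|kc]; last first.
  have -> : k - c = 0 by lia.
  have -> : k - c.+1 = 0 by lia.
  by rewrite leq_add2l leq_pexp2l //; lia.
have -> : k - c = (k - c.+1).+1 by lia.
have -> : k - x = (k - x.+1).+1 by lia.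
have : b ^ (k - c.+1) <= b ^ (k - x.+1) by apply: leq_pexp2l => //; lia.
rewrite !expnS; nia.
Qed.

Lemma expn_subn_convex_strict b k x c : 1 < b -> x < c -> c < k ->
  b ^ (k - c) + b ^ (k - x.+1) < b ^ (k - c.+1) + b ^ (k - x).
Proof.
move=> b_gt1 xc ck.
have -> : k - c = (k - c.+1).+1 by lia.
have -> : k - x = (k - x.+1).+1 by lia.
have : b ^ (k - c.+1) < b ^ (k - x.+1) by rewrite ltn_exp2l //; lia.
rewrite !expnS; nia.
Qed.

Lemma card_bigcup_disjoint (I T : finType) (P : pred I) (F : I -> {set T}) :
  (forall i j, i != j -> [disjoint F i & F j]) ->
  #|\bigcup_(i | P i) F i| = \sum_(i | P i) #|F i|.
Proof.
move=> disjF; rewrite big_mkcond [RHS]big_mkcond /= -sum1_card.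
rewrite partition_disjoint_bigcup => [|i j ij]; last first.
  by case: (P i); case: (P j); rewrite ?disjF // -setI_eq0 ?setI0 ?set0I.
by apply: eq_bigr => i _; case: (P i); rewrite sum1_card ?cards0.
Qed.

Lemma disjoint_setU1D (T : finType) (A B : {set T}) x :
  [disjoint A & B] -> [disjoint x |: A & B :\ x].
Proof.
move=> dAB; rewrite -setI_eq0; apply/eqP/setP => y; rewrite !inE.
by case: eqVneq => //= _; case: (boolP (y \in A)) => // /(disjointFr dAB) ->.
Qed.

Section Profiles.
Variables n m : nat.
Implicit Types h : 'I_n -> nat.

(* Additive form of "h' = h - e_u + e_v", free of truncated subtraction; for
   u = v it says h' = h. *)
Definition shifted h (u v : 'I_n) h' := forall i, h' i + (i == u) = h i + (i == v).

Definition excess h h' := \sum_i (h i - h' i).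

Lemma shifted_trans h h1 h2 u w v :
  shifted h u w h1 -> shifted h1 w v h2 -> shifted h u v h2.
Proof. by move=> sh1 sh2 i; have := sh1 i; have := sh2 i; lia. Qed.

Lemma shiftedE h h' u v : shifted h u v h' -> u != v ->
  [/\ (h' u).+1 = h u, h' v = (h v).+1 & forall i, i != u -> i != v -> h' i = h i].
Proof.
move=> sh uv; split=> [||i iu iv].
- by have := sh u; rewrite eqxx (negPf uv) addn1 addn0.
- by have := sh v; rewrite eqxx eq_sym (negPf uv) addn1 addn0.
- by have := sh i; rewrite (negPf iu) (negPf iv) !addn0.
Qed.

Lemma sum_shifted h h' u v : shifted h u v h' -> \sum_i h' i = \sum_i h i.
Proof.
have sum_eq1 w : \sum_(i < n) (i == w : nat) = 1.
  by rewrite (bigD1 w) //= eqxx big1 // => i /negbTE ->.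
move=> sh; apply/eqP; rewrite -(eqn_add2r 1) -{1}(sum_eq1 u) -(sum_eq1 v).
by rewrite -!big_split; apply/eqP/eq_bigr => i _; apply: sh.
Qed.

Lemma shifted_tperm h h' u v : shifted h v u h' -> h v = (h u).+1 ->
  forall i, h' i = h (tperm u v i).
Proof.
move=> sh huv; have vu : v != u by apply/eqP => vu; move: huv; rewrite vu; lia.
have [hv hu hi] := shiftedE sh vu.
by move=> i; case: tpermP => [->|->|iu iv]; [lia | lia | rewrite hi //; apply/eqP].
Qed.

Lemma excess_eq0 h h' : \sum_i h' i = \sum_i h i -> excess h h' = 0 -> h' =1 h.
Proof.
move=> sum_eq /eqP; rewrite sum_nat_eq0 => /'forall_eqP le_hh' i.
have {}le_hh' j : h j <= h' j by rewrite -subn_eq0 le_hh'.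
apply/eqP; rewrite eqn_leq le_hh' andbT -subn_eq0.
have /eqP := @sumnB _ (index_enum _) xpredT _ _ (fun j _ => le_hh' j).
by rewrite sum_eq subnn sum_nat_eq0 => /'forall_eqP ->.
Qed.

Lemma excess_shifted_lt h h' h'' u v : shifted h' v u h'' ->
  h' u < h u -> h v < h' v -> excess h h'' < excess h h'.
Proof.
move=> sh ltu ltv; have vu : v != u by apply: contraTneq ltv => ->; lia.
have [hv hu hi] := shiftedE sh vu.
apply: (sum_ltn (i0 := u)) => // [i _|]; last lia.
case: (eqVneq i u) => [->|iu]; first lia.
by case: (eqVneq i v) => [->|iv]; [lia | rewrite hi].
Qed.

Lemma leximin_shifted h h' u v : shifted h u v h' -> u != v ->
  leximin m h' + (m ^ (m - (h' u).+1) + m ^ (m - h v)) =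
  leximin m h + (m ^ (m - h' u) + m ^ (m - (h v).+1)).
Proof.
move=> sh uv; have [hu hv hi] := shiftedE sh uv.
have hi' i : i != u -> i != v -> m ^ (m - h' i) = m ^ (m - h i) by move=> ? ?; rewrite hi.
by have := sum_update2 uv hi'; rewrite -/(leximin m h') -/(leximin m h) -hu hv.
Qed.

Lemma leximin_shifted_le h h' u v : shifted h u v h' -> h v < h u <= m ->
  leximin m h' <= leximin m h.
Proof.
move=> sh /andP[lt_vu le_um].
have uv : u != v by apply: contraTneq lt_vu => ->; rewrite ltnn.
have [hu _ _] := shiftedE sh uv; have := leximin_shifted sh uv.
have m_gt0 : 0 < m by lia.
have le_vu : h v <= h' u by lia.
have := expn_subn_convex m m_gt0 le_vu; lia.
Qed.

Lemma leximin_shifted_lt h h' u v : shifted h u v h' -> h v + 2 <= h u <= m ->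
  leximin m h' < leximin m h.
Proof.
move=> sh /andP[lt_vu le_um].
have uv : u != v by apply: contraTneq lt_vu => ->; lia.
have [hu _ _] := shiftedE sh uv; have := leximin_shifted sh uv.
have m_gt1 : 1 < m by lia.
have lt_vu' : h v < h' u by lia.
have lt_um : h' u < m by lia.
have := expn_subn_convex_strict m_gt1 lt_vu' lt_um; lia.
Qed.

Lemma leximin_perm h (s : {perm 'I_n}) : leximin m (fun i => h (s i)) = leximin m h.
Proof. by rewrite /leximin [RHS](reindex_inj (@perm_inj _ s)). Qed.

End Profiles.

Section Allocations.
Variables (n m : nat) (L : 'I_n -> {set 'I_m}).
Implicit Types chi : alloc n m.

Local Notation clean_max_usw := (clean_max_usw L).
Local Notation arc := (Defs.arc L).
Local Notation transfer := (transfer L).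
Local Notation stable := (stable L).
Local Notation leximin_optimal := (leximin_optimal L).

Lemma profile_le chi i : profile chi i <= m.
Proof. by rewrite /profile (leq_trans (max_card _)) // card_ord. Qed.

Lemma usw_clean chi : clean L chi -> usw L chi = \sum_i profile chi i.
Proof. by move=> cl; apply: eq_bigr => i _; rewrite /Defs.val (setIidPl (cl i)). Qed.

Lemma sum_profile_clean_max_usw chi chi' : clean_max_usw chi -> clean_max_usw chi' ->
  \sum_i profile chi' i = \sum_i profile chi i.
Proof.
move=> [cl [al mx]] [cl' [al' mx']]; rewrite -!usw_clean //.
by apply/eqP; rewrite eqn_leq mx ?mx'.
Qed.

Lemma clean_max_usw_sum_profile chi chi' : clean_max_usw chi -> clean L chi' ->
  is_alloc chi' -> \sum_i profile chi' i = \sum_i profile chi i -> clean_max_usw chi'.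
Proof.
move=> [cl [_ mx]] cl' al' sum_eq; split=> //; split=> // chi'' al''.
by rewrite [usw L chi']usw_clean // sum_eq -usw_clean //; apply: mx.
Qed.

Lemma alloc_memE chi u o : is_alloc chi -> o \in chi u -> forall i, (o \in chi i) = (i == u).
Proof.
move=> al ou i; case: eqVneq => [->//|iu].
by apply: disjointFr ou; apply: al; rewrite eq_sym.
Qed.

(* Removing o from all other bundles only affects its holder, if any. *)
Definition give chi w o : alloc n m :=
  [ffun i => if i == w then o |: chi i else chi i :\ o].

Lemma profile_give chi w o i :
  profile (give chi w o) i + (o \in chi i) = profile chi i + (i == w).
Proof.
rewrite /profile ffunE; case: eqVneq => [->|_].
  by rewrite cardsU1; case: (o \in chi w); rewrite /= ?add0n ?addn0 addnC.
by rewrite (cardsD1 o (chi i)) addnC addn0.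
Qed.

Lemma give_alloc chi w o : is_alloc chi -> is_alloc (give chi w o).
Proof.
move=> al i j ij; rewrite !ffunE.
case: (eqVneq i w) => [iw|iw]; case: (eqVneq j w) => [jw|jw].
- by rewrite iw jw eqxx in ij.
- by apply: disjoint_setU1D; apply: al.
- by rewrite disjoint_sym; apply: disjoint_setU1D; apply: al; rewrite eq_sym.
- by apply: disjointW (al _ _ ij); apply: subsetDl.
Qed.

Lemma give_clean chi w o : clean L chi -> o \in L w -> clean L (give chi w o).
Proof.
move=> cl oL i; rewrite ffunE; case: eqVneq => [->|_].
  by rewrite subUset sub1set oL cl.
exact: subset_trans (subsetDl _ _) (cl i).
Qed.

Lemma give_subset chi w o i : o \notin chi i -> chi i \subset give chi w o i.
Proof.
move=> oi; apply/subsetP => x xi; rewrite ffunE; case: ifP => _.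
  by rewrite setU1r.
by rewrite in_setD1 xi andbT; apply: contraNneq oi => <-.
Qed.

Lemma liked_item_allocated chi w o : clean_max_usw chi -> o \in L w ->
  exists u, o \in chi u.
Proof.
move=> cm oL; case: (boolP [exists u, o \in chi u]) => [/existsP//|/existsPn unalloc].
have [cl [al mx]] := cm.
have := mx _ (give_alloc w o al); rewrite leqNgt => /negP; case.
have cl' := give_clean cl oL.
rewrite !usw_clean //; apply: (sum_ltn (i0 := w)) => // [i _|].
  by have := profile_give chi w o i; rewrite (negPf (unalloc i)); lia.
by have := profile_give chi w o w; rewrite (negPf (unalloc w)) eqxx; lia.
Qed.

Lemma give_clean_max_usw chi u w o : clean_max_usw chi -> o \in chi u -> o \in L w ->
  clean_max_usw (give chi w o) /\ shifted (profile chi) u w (profile (give chi w o)).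
Proof.
move=> cm ou oL; have [cl [al _]] := cm.
have sh : shifted (profile chi) u w (profile (give chi w o)).
  by move=> i; rewrite -(alloc_memE al ou) profile_give.
split=> //; apply: clean_max_usw_sum_profile cm _ _ (sum_shifted sh).
  exact: give_clean.
exact: give_alloc.
Qed.

Lemma path_shifted chi u p : clean_max_usw chi -> path (arc chi) u p -> uniq (u :: p) ->
  exists2 chi', clean_max_usw chi' & shifted (profile chi) u (last u p) (profile chi').
Proof.
elim: p chi u => [|w p IHp] chi u cm; first by exists chi.
rewrite /= => /andP[/andP[uw /existsP[o /andP[ou oL]]] p_path] /andP[u_p uniq_p].
have [cm1 sh1] := give_clean_max_usw cm ou oL.
have [|chi2 cm2 sh2] := IHp _ w cm1 _ uniq_p; last first.
  by exists chi2; last exact: shifted_trans sh1 sh2.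
apply: (sub_in_path (P := predC1 u)) p_path; last first.
  by apply/allP => x xp; apply: contraNneq u_p => <-.
move=> x y /= xu _ /andP[xy /existsP[o' /andP[o'x o'L]]].
rewrite /Defs.arc xy; apply/existsP; exists o'; rewrite o'L andbT.
have ox : o \notin chi x by rewrite (alloc_memE cm.2.1 ou).
exact: (subsetP (give_subset w ox)) o'x.
Qed.

Lemma transfer_shifted chi u v : clean_max_usw chi -> transfer chi u v ->
  exists2 chi', clean_max_usw chi' & shifted (profile chi) u v (profile chi').
Proof. by move=> cm [p [_ p_path <- uniq_p]]; apply: path_shifted. Qed.

Lemma connect_transfer chi u v : u != v -> connect (arc chi) u v -> transfer chi u v.
Proof.
move=> uv /connectP[p p_path def_v].
case: (shortenP p_path) def_v => q q_path uniq_q _ def_v.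
by exists q; split=> //; apply: contraNneq uv => q0; rewrite def_v q0.
Qed.

Definition item_flow chi chi' : rel 'I_n :=
  fun a b => (a != b) && [exists o, (o \in chi a) && (o \in chi' b)].

Lemma item_flow_closed chi chi' u : clean L chi -> clean_max_usw chi' ->
  \bigcup_(i | connect (item_flow chi chi') u i) chi i \subset
  \bigcup_(i | connect (item_flow chi chi') u i) chi' i.
Proof.
move=> cl cm'; apply/subsetP => x /bigcupP[i ui xi].
have [b xb] := liked_item_allocated cm' (subsetP (cl i) x xi).
apply/bigcupP; exists b => //; case: (eqVneq i b) => [<-//|ib].
apply: connect_trans ui (connect1 _); rewrite /item_flow ib.
by apply/existsP; exists x; rewrite xi.
Qed.

Lemma exchange_connect chi chi' u : clean_max_usw chi -> clean_max_usw chi' ->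
  profile chi' u < profile chi u ->
  exists2 v, connect (item_flow chi chi') u v & profile chi v < profile chi' v.
Proof.
move=> [cl [al _]] cm' lt_u; apply/exists_inP; apply: contraT => /exists_inPn no_gain.
have := subset_leq_card (item_flow_closed u cl cm').
rewrite !card_bigcup_disjoint //; last by case: cm' => _ [].
rewrite leqNgt => /negbTE <-.
by apply: (sum_ltn (i0 := u)) => // i /no_gain; rewrite -leqNgt.
Qed.

Lemma item_flow_sub_arc chi chi' : clean L chi' -> subrel (item_flow chi chi') (arc chi).
Proof.
move=> cl' a b /andP[ab /existsP[o /andP[oa ob]]]; rewrite /Defs.arc ab.
by apply/existsP; exists o; rewrite oa (subsetP (cl' b)).
Qed.

Lemma item_flow_sub_arc_rev chi chi' : clean L chi ->
  subrel [rel a b | item_flow chi chi' b a] (arc chi').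
Proof.
move=> cl a b /andP[ba /existsP[o /andP[ob oa]]]; rewrite /Defs.arc eq_sym ba.
by apply/existsP; exists o; rewrite oa (subsetP (cl b)).
Qed.

Lemma exchange_transfer chi chi' u : clean_max_usw chi -> clean_max_usw chi' ->
  profile chi' u < profile chi u ->
  exists v, [/\ profile chi v < profile chi' v, transfer chi u v & transfer chi' v u].
Proof.
move=> cm cm' lt_u; have [v uv_flow lt_v] := exchange_connect cm cm' lt_u.
have uv : u != v by apply: contraTneq lt_v => <-; rewrite -leqNgt ltnW.
have vu_flow : connect [rel a b | item_flow chi chi' b a] v u by rewrite connect_rev.
exists v; split=> //.
  apply: (connect_transfer uv); apply: (connect_sub _ uv_flow) => a b.
  by move/(item_flow_sub_arc cm'.1)/connect1.
apply: connect_transfer; first by rewrite eq_sym.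
apply: (connect_sub _ vu_flow) => a b.
by move/(item_flow_sub_arc_rev cm.1)/connect1.
Qed.

Lemma stable_excess_step chi chi' : stable chi -> clean_max_usw chi' ->
  0 < excess (profile chi) (profile chi') ->
  exists u v chi'', [/\ clean_max_usw chi'', shifted (profile chi') v u (profile chi''),
    excess (profile chi) (profile chi'') < excess (profile chi) (profile chi'),
    profile chi' u < profile chi' v & transfer chi' v u].
Proof.
move=> [cm no_narrowing] cm' excess_gt0.
have [u lt_u] : exists u, profile chi' u < profile chi u.
  apply/existsP; apply: contraTT excess_gt0 => /existsPn le_h'h.
  rewrite -leqNgt leqn0 sum_nat_eq0; apply/'forall_eqP => i.
  by apply/eqP; rewrite subn_eq0 leqNgt le_h'h.
have [v [lt_v tr tr']] := exchange_transfer cm cm' lt_u.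
have le_uv : profile chi u <= (profile chi v).+1.
  by rewrite leqNgt; apply/negP => lt; apply: (no_narrowing u v); split=> //; lia.
have [chi'' cm'' sh] := transfer_shifted cm' tr'.
exists u, v, chi''; split=> //; first exact: excess_shifted_lt.
lia.
Qed.

Lemma stable_leximin_le chi chi' : stable chi -> clean_max_usw chi' ->
  leximin m (profile chi) <= leximin m (profile chi').
Proof.
move=> st; have [k lt_k] := ubnP (excess (profile chi) (profile chi')).
elim: k chi' lt_k => // k IHk chi' lt_k cm'.
case: (posnP (excess (profile chi) (profile chi'))) => [e0|e_gt0].
  apply/eq_leq/eq_bigr => i _.
  by rewrite (excess_eq0 (sum_profile_clean_max_usw st.1 cm') e0).
have [u [v [chi'' [cm'' sh lt_e lt_uv _]]]] := stable_excess_step st cm' e_gt0.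
apply: leq_trans (IHk _ _ cm'') _; first exact: leq_trans lt_e _.
by apply: (leximin_shifted_le sh); rewrite lt_uv profile_le.
Qed.

Lemma stable_leximin_optimal chi : stable chi -> leximin_optimal chi.
Proof. by move=> st; split=> [|chi' /(stable_leximin_le st)]; first exact: st.1. Qed.

Lemma leximin_optimal_stable chi : leximin_optimal chi -> stable chi.
Proof.
move=> [cm opt]; split=> // u v [tr lt_vu].
have [chi' cm' sh] := transfer_shifted cm tr.
have lt : leximin m (profile chi') < leximin m (profile chi).
  by apply: (leximin_shifted_lt sh); rewrite lt_vu profile_le.
by have := opt _ cm'; rewrite leqNgt lt.
Qed.

Lemma leximin_optimal_profile_perm chi chi' : stable chi -> leximin_optimal chi' ->
  exists s : {perm 'I_n}, forall i, profile chi' i = profile chi (s i).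
Proof.
move=> st; have [k lt_k] := ubnP (excess (profile chi) (profile chi')).
elim: k chi' lt_k => // k IHk chi' lt_k opt'.
case: (posnP (excess (profile chi) (profile chi'))) => [e0|e_gt0].
  exists 1%g => i; rewrite perm1.
  exact: (excess_eq0 (sum_profile_clean_max_usw st.1 opt'.1) e0 i).
have [u [v [chi'' [cm'' sh lt_e lt_uv tr]]]] := stable_excess_step st opt'.1 e_gt0.
have succ_uv : profile chi' v = (profile chi' u).+1.
  apply/eqP; rewrite eqn_leq lt_uv andbT leqNgt; apply/negP => lt.
  by apply: ((leximin_optimal_stable opt').2 v u); split=> //; lia.
have tperm_uv := shifted_tperm sh succ_uv.
have opt'' : leximin_optimal chi''.
  split=> // chi3 cm3; apply: leq_trans (opt'.2 _ cm3).
  rewrite -[leximin m (profile chi')](leximin_perm m _ (tperm u v)).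
  by apply/eq_leq/eq_bigr => i _; rewrite tperm_uv.
have [s Hs] := IHk chi'' (leq_trans lt_e lt_k) opt''.
by exists (tperm u v * s)%g => i; rewrite permM -Hs tperm_uv tpermK.
Qed.

End Allocations.

Theorem lemma1 (n m : nat) (L : 'I_n -> {set 'I_m}) :
  (forall chi : alloc n m, stable L chi -> leximin_optimal L chi) /\
  (forall chi1 chi2 : alloc n m, stable L chi1 -> stable L chi2 ->
     exists s : {perm 'I_n}, forall i, profile chi2 i = profile chi1 (s i)).
Proof.
split=> [chi|chi1 chi2 st1 st2]; first exact: stable_leximin_optimal.
exact: leximin_optimal_profile_perm st1 (stable_leximin_optimal st2).
Qed.
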